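(* Let $N\ge2$, $\tilde m\in(0,1)^N$ with entries summing to $1$, $\mathbb{U}=\{X\in\mathbb{R}^{N\times 3}\mid \tilde m^\top X=\mathbf{0}^\top\}$, $m=3(N-1)$, $\varphi:\mathbb{R}^m\to\mathbb{U}$ a linear isometric isomorphism, $\mathbb{T}\subseteq\mathrm{O}(3)$, and $\mathbb{P}$ the set of $N\times N$ permutation matrices mapping $\mathbb{U}$ into itself. Let $\hat\varepsilon^\varphi_\theta:\mathbb{U}\times\mathbb{R}^{N\times d}\times\{0,\dots,T\}\to\mathbb{U}$ be a function (the denoiser) such that for every $R\in\mathbb{T}$ and $\Pi\in\mathbb{P}$, $$\hat\varepsilon^\varphi_\theta(\Pi XR^\top,\Pi C,t)=\Pi\,\hat\varepsilon^\varphi_\theta(X,C,t)\,R^\top\quad\text{for all }X\in\mathbb{U},\ C\in\mathbb{R}^{N\times d},\ t.$$ Then the transitions $p_\theta(z_{t-1}\mid z_t,C)$ ($1\le t\le T$) and $p_\theta(x\mid z_0,C)$ of the associated diffusion model are $(\mathbb{T},\mathbb{P})$-equivariant.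
   Context: Noise schedule: $\alpha_t\in(0,1)$ for $t=0,\dots,T$, $\sigma_t^2=1-\alpha_t^2$, $\alpha_{-1}=1$, $\tilde\alpha_t=\alpha_t/\alpha_{t-1}$, $\tilde\sigma_t^2=\sigma_t^2-\tilde\alpha_t^2\sigma_{t-1}^2$. The denoiser on $\mathbb{R}^m$ is $\hat\varepsilon_\theta(u,C,t)=\varphi^{-1}(\hat\varepsilon^\varphi_\theta(\varphi(u),C,t))$, and $\hat x_\theta(u,C,t)=\frac{1}{\alpha_t}u-\frac{\sigma_t}{\alpha_t}\hat\varepsilon_\theta(u,C,t)$. The transitions are $p_\theta(x\mid z_0,C)=\mathcal{N}(x;\hat x_\theta(z_0,C,0),\alpha_0^2\sigma_0^{-2}I_m)$ and, for $t\ge1$, $p_\theta(z_{t-1}\mid z_t,C)=\mathcal{N}\big(z_{t-1};\frac{\tilde\alpha_t\sigma_{t-1}^2}{\sigma_t^2}z_t+\frac{\alpha_{t-1}\tilde\sigma_t^2}{\sigma_t^2}\hat x_\theta(z_t,C,t),\frac{\tilde\sigma_t^2\sigma_{t-1}^2}{\sigma_t^2}I_m\big)$. For $R\in\mathbb{T}$ and $\Pi\in\mathbb{P}$ define $\lambda(u)=\varphi^{-1}(\Pi\varphi(u)R^\top)$. A conditional density $p(\cdot\mid\cdot,\cdot):\mathbb{R}^m\times\mathbb{R}^m\times\mathbb{R}^{N\times d}\to\mathbb{R}$ is $(\mathbb{T},\mathbb{P})$-equivariant if $p(\lambda(u)\mid\lambda(u'),\Pi C)=p(u\mid u',C)$ for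 all $R\in\mathbb{T}$, $\Pi\in\mathbb{P}$, $u,u'\in\mathbb{R}^m$, $C\in\mathbb{R}^{N\times d}$. *)

From HB Require Import structures.
From mathcomp Require Import all_boot all_order all_algebra perm.
From mathcomp Require Import all_classical all_reals all_analysis.
Set Implicit Arguments. Unset Strict Implicit. Unset Printing Implicit Defensive.
Import Order.TTheory GRing.Theory Num.Theory.
Local Open Scope ring_scope.

Section Defs.
Variable R : realType.

Definition sqnorm (p q : nat) (A : 'M[R]_(p, q)) : R :=
  \sum_(i < p) \sum_(j < q) A i j ^+ 2.

Definition gauss (m : nat) (mu : 'rV[R]_m) (v : R) (x : 'rV[R]_m) : R :=
  (Num.sqrt (2 * pi * v)) ^- m * expR (- sqnorm (x - mu) / (2 * v)).

(* noise schedule: alpha t for t = 0..T; alpha_{-1} = 1 *)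
Definition sigma2 (alpha : nat -> R) (t : nat) : R := 1 - alpha t ^+ 2.
Definition sigma (alpha : nat -> R) (t : nat) : R := Num.sqrt (sigma2 alpha t).
Definition alpha_prev (alpha : nat -> R) (t : nat) : R :=
  if t is t'.+1 then alpha t' else 1.
Definition talpha (alpha : nat -> R) (t : nat) : R := alpha t / alpha_prev alpha t.
(* sigma_{t-1}^2 with sigma_{-1}^2 = 1 - alpha_{-1}^2 = 0 *)
Definition sigma2_prev (alpha : nat -> R) (t : nat) : R := 1 - alpha_prev alpha t ^+ 2.
Definition tsigma2 (alpha : nat -> R) (t : nat) : R :=
  sigma2 alpha t - talpha alpha t ^+ 2 * sigma2_prev alpha t.

Variables (N d m : nat).

Definition inU (mt : 'rV[R]_N) (X : 'M[R]_(N, 3)) : Prop := mt *m X = 0.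

Definition eps_hat (phi : 'rV[R]_m -> 'M[R]_(N, 3)) (phiinv : 'M[R]_(N, 3) -> 'rV[R]_m)
  (epsphi : 'M[R]_(N, 3) -> 'M[R]_(N, d) -> nat -> 'M[R]_(N, 3))
  (u : 'rV[R]_m) (C : 'M[R]_(N, d)) (t : nat) : 'rV[R]_m :=
  phiinv (epsphi (phi u) C t).

Definition x_hat (alpha : nat -> R) (phi : 'rV[R]_m -> 'M[R]_(N, 3))
  (phiinv : 'M[R]_(N, 3) -> 'rV[R]_m)
  (epsphi : 'M[R]_(N, 3) -> 'M[R]_(N, d) -> nat -> 'M[R]_(N, 3))
  (u : 'rV[R]_m) (C : 'M[R]_(N, d)) (t : nat) : 'rV[R]_m :=
  (alpha t)^-1 *: u - (sigma alpha t / alpha t) *: eps_hat phi phiinv epsphi u C t.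

Definition p_final alpha phi phiinv epsphi (x z0 : 'rV[R]_m) (C : 'M[R]_(N, d)) : R :=
  gauss (x_hat alpha phi phiinv epsphi z0 C 0)
        (alpha 0 ^+ 2 / sigma2 alpha 0) x.

Definition p_step alpha phi phiinv epsphi (t : nat) (zprev zt : 'rV[R]_m)
  (C : 'M[R]_(N, d)) : R :=
  gauss ((talpha alpha t * sigma2_prev alpha t / sigma2 alpha t) *: zt
         + (alpha_prev alpha t * tsigma2 alpha t / sigma2 alpha t)
             *: x_hat alpha phi phiinv epsphi zt C t)
        (tsigma2 alpha t * sigma2_prev alpha t / sigma2 alpha t) zprev.

Definition lam (phi : 'rV[R]_m -> 'M[R]_(N, 3)) (phiinv : 'M[R]_(N, 3) -> 'rV[R]_m)
  (Rm : 'M[R]_3) (Pi : 'M[R]_N) (u : 'rV[R]_m) : 'rV[R]_m :=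
  phiinv (Pi *m phi u *m Rm^T).

Definition orth3 (Rm : 'M[R]_3) : Prop := Rm^T *m Rm = 1%:M.

Definition inP (mt : 'rV[R]_N) (Pi : 'M[R]_N) : Prop :=
  (exists s : {perm 'I_N}, Pi = perm_mx s) /\ (forall X, inU mt X -> inU mt (Pi *m X)).

Definition equivariant (Tset : 'M[R]_3 -> Prop) (mt : 'rV[R]_N)
  (phi : 'rV[R]_m -> 'M[R]_(N, 3)) (phiinv : 'M[R]_(N, 3) -> 'rV[R]_m)
  (p : 'rV[R]_m -> 'rV[R]_m -> 'M[R]_(N, d) -> R) : Prop :=
  forall (Rm : 'M[R]_3) (Pi : 'M[R]_N), Tset Rm -> inP mt Pi ->
  forall (u u' : 'rV[R]_m) (C : 'M[R]_(N, d)),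
    p (lam phi phiinv Rm Pi u) (lam phi phiinv Rm Pi u') (Pi *m C) = p u u' C.

End Defs.

From HB Require Import structures.
From mathcomp Require Import all_boot all_order all_algebra perm.
From mathcomp Require Import all_classical all_reals all_analysis.
Import Order.TTheory GRing.Theory Num.Theory.
Local Open Scope ring_scope.

(* The map lambda is the phi-conjugate of X |-> Pi X R^T, which is linear and
   preserves the Frobenius norm on U; hence lambda is a linear isometry of
   R^m.  Equivariance of the denoiser makes x_hat commute with lambda, so the
   mean of each Gaussian transition is transported by lambda, and an isotropic
   Gaussian density only depends on the norm of x - mean. *)

Lemma sqnormE (R : realType) (p q : nat) (A : 'M[R]_(p, q)) :
  sqnorm A = \tr (A *m A^T).
Proof.
rewrite /sqnorm /mxtrace; apply: eq_bigr => i _; rewrite mxE.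
by apply: eq_bigr => j _; rewrite !mxE expr2.
Qed.

Lemma sqnorm_perm_orth (R : realType) (p q : nat) (s : 'S_p) (Q : 'M[R]_q)
    (A : 'M[R]_(p, q)) :
  Q^T *m Q = 1%:M -> sqnorm (perm_mx s *m A *m Q^T) = sqnorm A.
Proof.
move=> QQ; rewrite !sqnormE !trmx_mul trmxK -!mulmxA (mulmxA Q^T) QQ mul1mx.
by rewrite mxtrace_mulC -!mulmxA tr_perm_mx -perm_mxM mulVg perm_mx1 mulmx1.
Qed.

Lemma gauss_isometry (R : realType) (m : nat) (f : 'rV[R]_m -> 'rV[R]_m)
    (mu x : 'rV[R]_m) (v : R) :
  {morph f : y z / y - z} -> (forall y, sqnorm (f y) = sqnorm y) ->
  gauss (f mu) v (f x) = gauss mu v x.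
Proof. by move=> fB f_iso; rewrite /gauss -fB f_iso. Qed.

Definition denoiser_equivariant_at {R : realType} {N d : nat} (mt : 'rV[R]_N)
    (Rm : 'M[R]_3) (Pi : 'M[R]_N)
    (epsphi : 'M[R]_(N, 3) -> 'M[R]_(N, d) -> nat -> 'M[R]_(N, 3)) (t : nat) :=
  (forall X C, inU mt X -> inU mt (epsphi X C t)) /\
  (forall X C, inU mt X ->
     epsphi (Pi *m X *m Rm^T) (Pi *m C) t = Pi *m epsphi X C t *m Rm^T).

Section Lambda.
Context {R : realType} {N d m : nat} {mt : 'rV[R]_N}.
Context {phi : 'rV[R]_m -> 'M[R]_(N, 3)} {phiinv : 'M[R]_(N, 3) -> 'rV[R]_m}.
Hypothesis phi_linear : linear phi.
Hypothesis phiU : forall u, inU mt (phi u).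
Hypothesis phi_iso : forall u, sqnorm (phi u) = sqnorm u.
Hypothesis phiK : cancel phi phiinv.
Hypothesis phiinvK : forall X, inU mt X -> phi (phiinv X) = X.
Context {Rm : 'M[R]_3} {Pi : 'M[R]_N}.
Hypothesis Rm_orth : orth3 Rm.
Hypothesis Pi_perm : exists s, Pi = perm_mx s.
Hypothesis PiU : forall X, inU mt X -> inU mt (Pi *m X).

Local Notation lambda := (lam phi phiinv Rm Pi).

Lemma inU_act X : inU mt X -> inU mt (Pi *m X *m Rm^T).
Proof. by move=> /PiU XU; rewrite /inU mulmxA XU mul0mx. Qed.

Lemma phi_lam u : phi (lambda u) = Pi *m phi u *m Rm^T.
Proof. exact/phiinvK/inU_act. Qed.

Lemma lam_is_linear : linear lambda.
Proof.
move=> a u v; apply: (can_inj phiK).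
by rewrite phi_linear !phi_lam phi_linear mulmxDr mulmxDl -scalemxAr -scalemxAl.
Qed.

HB.instance Definition _ :=
  GRing.isLinear.Build R 'rV[R]_m 'rV[R]_m *:%R lambda lam_is_linear.

Lemma sqnorm_lam u : sqnorm (lambda u) = sqnorm u.
Proof.
have [s Pis] := Pi_perm.
by rewrite -[LHS]phi_iso phi_lam Pis sqnorm_perm_orth ?phi_iso.
Qed.

Lemma gauss_lam mu v x : gauss (lambda mu) v (lambda x) = gauss mu v x.
Proof. exact/gauss_isometry/sqnorm_lam/linearB. Qed.

Section Step.
Context {alpha : nat -> R} {t : nat}.
Context {epsphi : 'M[R]_(N, 3) -> 'M[R]_(N, d) -> nat -> 'M[R]_(N, 3)}.
Hypothesis eps_t : denoiser_equivariant_at mt Rm Pi epsphi t.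

Lemma x_hat_lam u C :
  x_hat alpha phi phiinv epsphi (lambda u) (Pi *m C) t
  = lambda (x_hat alpha phi phiinv epsphi u C t).
Proof.
have [epsU eps_equiv] := eps_t.
rewrite /x_hat linearB !linearZ /= /eps_hat phi_lam eps_equiv //.
by rewrite /lam phiinvK //; apply/epsU/phiU.
Qed.

Lemma p_step_lam zprev zt C :
  p_step alpha phi phiinv epsphi t (lambda zprev) (lambda zt) (Pi *m C)
  = p_step alpha phi phiinv epsphi t zprev zt C.
Proof. by rewrite /p_step x_hat_lam -!linearZ -linearD gauss_lam. Qed.

End Step.

Lemma p_final_lam {alpha : nat -> R}
    {epsphi : 'M[R]_(N, 3) -> 'M[R]_(N, d) -> nat -> 'M[R]_(N, 3)} :
  denoiser_equivariant_at mt Rm Pi epsphi 0 ->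
  forall x z0 C, p_final alpha phi phiinv epsphi (lambda x) (lambda z0) (Pi *m C)
                 = p_final alpha phi phiinv epsphi x z0 C.
Proof. by move=> eps_0 x z0 C; rewrite /p_final x_hat_lam // gauss_lam. Qed.

End Lambda.

Theorem proposition6 (R : realType) (N d T : nat) (alpha : nat -> R)
  (mt : 'rV[R]_N)
  (phi : 'rV[R]_(3 * (N - 1)) -> 'M[R]_(N, 3))
  (phiinv : 'M[R]_(N, 3) -> 'rV[R]_(3 * (N - 1)))
  (Tset : 'M[R]_3 -> Prop)
  (epsphi : 'M[R]_(N, 3) -> 'M[R]_(N, d) -> nat -> 'M[R]_(N, 3)) :
  (2 <= N)%N ->
  (forall t, (t <= T)%N -> 0 < alpha t < 1) ->
  (forall i, 0 < mt 0 i < 1) ->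
  \sum_(i < N) mt 0 i = 1 ->
  (* phi : R^m -> U is a linear isometric isomorphism with inverse phiinv *)
  linear phi ->
  (forall u, inU mt (phi u)) ->
  (forall u, sqnorm (phi u) = sqnorm u) ->
  (forall u, phiinv (phi u) = u) ->
  (forall X, inU mt X -> phi (phiinv X) = X) ->
  (* T is a subset of O(3) *)
  (forall Rm, Tset Rm -> orth3 Rm) ->
  (* the denoiser maps U x R^{N x d} x {0..T} into U *)
  (forall X C t, inU mt X -> (t <= T)%N -> inU mt (epsphi X C t)) ->
  (* equivariance of the denoiser *)
  (forall Rm Pi, Tset Rm -> inP mt Pi ->
     forall X C t, inU mt X -> (t <= T)%N ->
       epsphi (Pi *m X *m Rm^T) (Pi *m C) t = Pi *m epsphi X C t *m Rm^T) ->
  (forall t, (1 <= t <= T)%N ->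
     equivariant Tset mt phi phiinv (p_step alpha phi phiinv epsphi t))
  /\ equivariant Tset mt phi phiinv (p_final alpha phi phiinv epsphi).
Proof.
move=> _ _ _ _ phi_lin phiU phi_iso phiK phiinvK T_orth epsU eps_equiv.
have eps_at t Rm Pi : (t <= T)%N -> Tset Rm -> inP mt Pi ->
    denoiser_equivariant_at mt Rm Pi epsphi t.
  by move=> tT TRm PiP; split=> X C XU; [apply: epsU | apply: eps_equiv].
split=> [t /andP[_ tT] | ] Rm Pi TRm PiP u u' C;
  have [Pi_perm PiU] := PiP; have Rm_orth := T_orth Rm TRm.
  exact: (p_step_lam phi_lin phiU phi_iso phiK phiinvK Rm_orth Pi_perm PiU
            (eps_at t Rm Pi tT TRm PiP)).
exact: (p_final_lam phi_lin phiU phi_iso phiK phiinvK Rm_orth Pi_perm PiU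
          (eps_at 0%N Rm Pi (leq0n T) TRm PiP)).
Qed.
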